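(* Let $p\colon G(J)\to D'(K)$ be a realizable puzzle, $J=(j_1,\dots,j_m)$, and write $p(\mathbf 1)=(\mathbf a_1\ \cdots\ \mathbf a_m)$ for $\mathbf 1=(1,\dots,1)$. For each $v\in[m]$ and each $2\le a\le j_v$, let $\mathbf h$ be the vertex of $G(J)$ with $h_v=a$ and $h_i=1$ for $i\ne v$; the subpuzzle on the edge $\{\mathbf 1,\mathbf h\}$ is realizable by a characteristic map over $\operatorname{wed}_vK$ whose projection at $v_2$ (corresponding to $\mathbf 1$) is $p(\mathbf 1)$, and we fix for it a standard form, i.e. a representative whose columns labeled $1,\dots,v-1,v_1,v_2,v+1,\dots,m$ are $(\mathbf a_i; e^{a}_{v,i})$ for $i\ne v$, $(\mathbf a_v;-1)$ and $(0;1)$, with $e^a_{v,i}\in R$. Define the block matrices $A_i=(\mathbf a_i\ 0\ \cdots\ 0)$ of size $n\times j_i$; $S_i$ of size $(j_i-1)\times j_i$ whose row $t$ ($1\le t\le j_i-1$) has $-1$ in column $1$, $1$ in column $t+1$ and $0$ elsewhere; and $E_{k,i}$ ($k\ne i$) of size $(j_k-1)\times j_i$ whose first column is $(e^2_{k,i},e^3_{k,i},\dots,e^{j_k}_{k,i})^T$ and other columns are zero. Then the matrix $$\Lambda=\begin{pmatrix} A_1&A_2&\cdots&A_m\\ S_1&E_{1,2}&\cdots&E_{1,m}\\ E_{2,1}&S_2&\cdots&E_{2,m}\\ \vdots&&\ddots&\vdots\\ E_{m,1}&\cdots&E_{m,m-1}&S_m\end{pmatrix},$$ with columns labeled $1_1,\dots,1_{j_1},2_1,\dots,2_{j_2},\dots,m_1,\dots,m_{j_m}$,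 is an $R$-characteristic map over $K(J)$ realizing $p$. In particular, a realizable puzzle is uniquely determined by $p(\mathbf 1)$ and the values $p(\boldsymbol\alpha)$ at the vertices $\boldsymbol\alpha$ adjacent to $\mathbf 1$.
   Context: Let $R\in\{\mathbb Z,\mathbb Z_2\}$; an $R$-basis of $R^n$ is a $\mathbb Z$-basis of $\mathbb Z^n$ ($R=\mathbb Z$) or a basis of $\mathbb Z_2^n$ ($R=\mathbb Z_2$). $K$ is an $(n-1)$-dimensional star-shaped simplicial sphere on $[m]$. An $R$-characteristic map over a complex with $(N-1)$-dimensional facets is a map from its vertices to $R^N$ sending each $(N-1)$-face to an $R$-basis, written as the matrix of its columns; D-J equivalence is equality up to left multiplication by $GL_N(R)$. For a face $\sigma$, $\operatorname{proj}_\sigma\lambda$ is the characteristic map on $\operatorname{link}\sigma$ given by $w\mapsto[\lambda(w)]\in R^N/\langle\lambda(u):u\in\sigma\rangle$, up to D-J equivalence. For $J=(j_1,\dots,j_m)\in\mathbb Z_{>0}^m$, $K(J)$ is the complex on vertices $\{i_k:1\le i\le m,1\le k\le j_i\}$ whose minimal non-faces are the sets $\bigcup_{i\in\tau}\{i_1,\dots,i_{j_i}\}$ for $\tau$ a minimal non-face of $K$; $\operatorname{wed}_vK=K(J)$ with $j_v=2$, $j_i=1$ otherwise (vertices $v_1,v_2$; $i_1$ written $i$). $I(J)=\{\boldsymbol\alpha\in\mathbb Z^m:1\le\alpha_i\le j_i\}$. For $\boldsymbol\alpha\in I(J)$, $\sigma(\boldsymbol\alpha)$ is the set of all vertices of $K(J)$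 except $1_{\alpha_1},\dots,m_{\alpha_m}$; it is a face, and $\operatorname{link}_{K(J)}\sigma(\boldsymbol\alpha)$ is identified with $K$ via $i_{\alpha_i}\mapsto i$. The pre-diagram $D'(K)$ is the edge-colored multigraph (loops allowed) whose vertices are D-J classes of $R$-characteristic maps over $K$, with an edge colored $v$ between $\lambda_1,\lambda_2$ iff some $R$-characteristic map $\Lambda$ over $\operatorname{wed}_vK$ has $\operatorname{proj}_{v_1}\Lambda=\lambda_1$, $\operatorname{proj}_{v_2}\Lambda=\lambda_2$ (via the identifications above). $G(J)$ is the $1$-skeleton of $\Delta^{j_1-1}\times\cdots\times\Delta^{j_m-1}$, with vertex set $I(J)$, two vertices adjacent iff they differ in exactly one coordinate $v$, such an edge being colored $v$. A puzzle of $(K,J)$ is a color-preserving graph homomorphism $p:G(J)\to D'(K)$. For an $R$-characteristic map $\Lambda$ over $K(J)$, the map $\boldsymbol\alpha\mapsto\operatorname{proj}_{\sigma(\boldsymbol\alpha)}\Lambda$ is a puzzle; puzzles of this form are called realizable (realized by $\Lambda$). For nonempty $S_i\subseteq[j_i]$, the restriction of $p$ to the induced subgraph on $\prod S_i$, identified with $G(J')$ ($j'_i=|S_i|$) via order-preserving bijections, is a subpuzzle, itself a puzzle of $(K,J')$. *)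

From HB Require Import structures.
From mathcomp Require Import all_boot all_order all_algebra.
Set Implicit Arguments. Unset Strict Implicit. Unset Printing Implicit Defensive.
Import Order.TTheory GRing.Theory Num.Theory.
Local Open Scope ring_scope.

Inductive coeff := CoefZ | CoefZ2.
Definition coefR (c : coeff) : comUnitRingType :=
  match c with CoefZ => int | CoefZ2 => 'Z_2 end.

Definition simplicial_complex (m : nat) (K : {set {set 'I_m}}) : Prop :=
  set0 \in K /\ (forall s t : {set 'I_m}, s \in K -> t \subset s -> t \in K)
  /\ (forall i, [set i] \in K).

Definition cone (F : realFieldType) (m n : nat) (w : 'I_m -> 'rV[F]_n)
  (s : {set 'I_m}) (x : 'rV[F]_n) : Prop :=
  exists c : 'I_m -> F, (forall i, 0 <= c i) /\ (forall i, i \notin s -> c i = 0)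
    /\ x = \sum_i c i *: w i.

Definition complete_fan (F : realFieldType) (m n : nat) (K : {set {set 'I_m}})
  (w : 'I_m -> 'rV[F]_n) : Prop :=
  (forall s, s \in K -> forall c : 'I_m -> F, (forall i, i \notin s -> c i = 0) ->
      \sum_i c i *: w i = 0 -> forall i, c i = 0)
  /\ (forall s t, s \in K -> t \in K -> forall x,
        cone w s x -> cone w t x -> cone w (s :&: t) x)
  /\ (forall x, exists2 s, s \in K & cone w s x).

Definition star_shaped_sphere (m n : nat) (K : {set {set 'I_m}}) : Prop :=
  simplicial_complex K
  /\ (exists2 s, s \in K & #|s| = n) /\ (forall s, s \in K -> #|s| <= n)%N
  /\ exists (F : realFieldType) (w : 'I_m -> 'rV[F]_n), complete_fan K w.

Definition min_nonface (V : finType) (L : {set {set V}}) (t : {set V}) : bool :=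
  (t \notin L) && [forall i in t, t :\ i \in L].

Definition link (V : finType) (L : {set {set V}}) (s : {set V}) : {set {set V}} :=
  [set t in L | [disjoint t & s] && (t :|: s \in L)].

Section CharMaps.
Variable R : comUnitRingType.

Definition is_basis (V : finType) (N : nat) (lam : V -> 'cV[R]_N) (s : {set V}) : Prop :=
  (forall x : 'cV[R]_N, exists c : V -> R, x = \sum_(u in s) c u *: lam u)
  /\ (forall c : V -> R, \sum_(u in s) c u *: lam u = 0 -> forall u, u \in s -> c u = 0).

Definition charmap (V : finType) (L : {set {set V}}) (N : nat) (lam : V -> 'cV[R]_N) : Prop :=
  forall s, s \in L -> #|s| = N -> is_basis lam s.

Definition DJ_equiv (V : finType) (N : nat) (lam mu : V -> 'cV[R]_N) : Prop :=
  exists2 g : 'M[R]_N, g \in unitmx & forall v, mu v = g *m lam v.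

(* mu (a map on the vertices W of the link, identified with vertices of the
   ambient complex through f) represents the D-J class of proj_s lam :
   mu w = P (lam (f w)), where P : R^N -> R^N' is surjective with kernel the
   span of lam(s), i.e. P realizes an isomorphism R^N / <lam(u) : u in s> ~ R^N'. *)
Definition is_proj (V W : finType) (N N' : nat) (s : {set V}) (lam : V -> 'cV[R]_N)
  (f : W -> V) (mu : W -> 'cV[R]_N') : Prop :=
  exists P : 'M[R]_(N', N),
    (forall y : 'cV[R]_N', exists x, P *m x = y)
    /\ (forall x : 'cV[R]_N, P *m x = 0 <-> exists c : V -> R, x = \sum_(u in s) c u *: lam u)
    /\ (forall w, mu w = P *m lam (f w)).
End CharMaps.
Arguments charmap {R V} L N lam.

(* J = (j_1,...,j_m) is encoded by d with j_i = (d i).+1; the copy i_k of vertex i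
   (1 <= k <= j_i) is Tagged i (k-1). *)
Definition KJV (m : nat) (d : 'I_m -> nat) : finType := {i : 'I_m & 'I_(d i).+1}.

Definition block (m : nat) (d : 'I_m -> nat) (t : {set 'I_m}) : {set KJV d} :=
  [set x : KJV d | tag x \in t].

Definition KJ (m : nat) (K : {set {set 'I_m}}) (d : 'I_m -> nat) : {set {set KJV d}} :=
  [set S : {set KJV d} | [forall t : {set 'I_m}, min_nonface K t ==> ~~ (block d t \subset S)]].

(* wed_v K : j_v = 2, j_i = 1 otherwise *)
Definition dwed (m : nat) (v : 'I_m) : 'I_m -> nat := fun i => nat_of_bool (i == v).

(* vertices of G(J) : I(J) = product of [j_i] (0-indexed) *)
Definition IJ (m : nat) (d : 'I_m -> nat) := forall i : 'I_m, 'I_(d i).+1.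

Definition oneJ (m : nat) (d : 'I_m -> nat) : IJ d := fun i => ord0.

(* the vertex h with h_v = b+1 (paper: h_v = b+1 in 1-indexed terms, here 0-indexed b) *)
Definition hJ (m : nat) (d : 'I_m -> nat) (v : 'I_m) (b : nat) : IJ d :=
  fun i => if i == v then inord b else ord0.

Definition sigmaJ (m : nat) (d : 'I_m -> nat) (al : IJ d) : {set KJV d} :=
  [set x : KJV d | x != Tagged (fun i => 'I_(d i).+1) (al (tag x))].

(* identification of link sigma(alpha) with K : i |-> i_{alpha_i} *)
Definition idJ (m : nat) (d : 'I_m -> nat) (al : IJ d) (i : 'I_m) : KJV d :=
  Tagged (fun i => 'I_(d i).+1) (al i).

(* A puzzle is given by representatives p alpha : 'I_m -> 'cV_n of the D-J classes. *)
Definition NJ (m n : nat) (d : 'I_m -> nat) : nat := (n + \sum_(i < m) d i)%N.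

Definition realized_by (R : comUnitRingType) (m n : nat) (d : 'I_m -> nat)
  (p : IJ d -> 'I_m -> 'cV[R]_n) (Lam : KJV d -> 'cV[R]_(NJ n d)) : Prop :=
  forall al : IJ d, is_proj (sigmaJ al) Lam (idJ al) (p al).

Definition realizable (R : comUnitRingType) (m n : nat) (K : {set {set 'I_m}})
  (d : 'I_m -> nat) (p : IJ d -> 'I_m -> 'cV[R]_n) : Prop :=
  exists Lam : KJV d -> 'cV[R]_(NJ n d), charmap (KJ K d) (NJ n d) Lam /\ realized_by p Lam.

Definition std_form (R : comUnitRingType) (m n : nat) (a : 'I_m -> 'cV[R]_n) (v : 'I_m)
  (ev : 'I_m -> R) (x : KJV (dwed v)) : 'cV[R]_(n + 1) :=
  if tag x == v then
    (if val (tagged x) == 0%N then col_mx (a v) (-1)%:M else col_mx 0 1%:M)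
  else col_mx (a (tag x)) (ev (tag x))%:M.

(* lower rows are indexed by (k, t), t : 'I_(d k) ; row (k,t) is row t+1 of block k *)
Definition lowrow (m : nat) (d : 'I_m -> nat) : finType := {k : 'I_m & 'I_(d k)}.

Definition Lambda_entry (R : comUnitRingType) (m : nat) (d : 'I_m -> nat)
  (e : 'I_m -> nat -> 'I_m -> R) (x : KJV d) (r : lowrow d) : R :=
  let i := tag x in let c := val (tagged x) in
  let k := tag r in let t := val (tagged r) in
  if k == i then (if c == 0%N then -1 else if c == t.+1 then 1 else 0)
  else (if c == 0%N then e k t.+1 i else 0).

Lemma card_lowrow (m : nat) (d : 'I_m -> nat) : #|lowrow d| = \sum_(i < m) d i.
Proof.
rewrite /lowrow card_tagged sumnE big_map big_enum /=.
by apply: eq_bigr => i _; rewrite card_ord.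
Qed.

Definition Lambda (R : comUnitRingType) (m n : nat) (d : 'I_m -> nat)
  (a : 'I_m -> 'cV[R]_n) (e : 'I_m -> nat -> 'I_m -> R) (x : KJV d) : 'cV[R]_(NJ n d) :=
  col_mx (if val (tagged x) == 0%N then a (tag x) else 0)
    (castmx (card_lowrow d, erefl 1%N)
       (\col_(r < #|lowrow d|) Lambda_entry e x (enum_val r))).

From HB Require Import structures.
From mathcomp Require Import all_boot all_order all_algebra.
From mathcomp Require Import zify lra.
From Stdlib Require Import Classical.
Set Implicit Arguments. Unset Strict Implicit. Unset Printing Implicit Defensive.
Import Order.TTheory GRing.Theory Num.Theory.
Local Open Scope ring_scope.

(* Columns that span R^N are determined up to D-J equivalence by their linear
   relations. If [lam] realizes [p], a relation [c] among the columns of [lam]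
   is the same as a coefficient vector whose projections vanish at 1 and at the
   neighbours of 1 in G(J): the projection at 1 leaves an element of the span
   of lam(sigma(1)), and the coefficient of [k_j] (j >= 2) in it is seen at the
   neighbour [h] with [h_k = j], where [p(h)_k] is nonzero because every vertex
   of the sphere [K] lies in a facet. Hence two realizable puzzles that agree
   at 1 and its neighbours have D-J equivalent realizations, and so agree
   everywhere. The block form of Lambda gives its relations directly: the top
   block is the relation at 1, and by the standard form of the edge subpuzzle
   row [t] of [S_k] is the relation at the neighbour with [h_k = t + 1]. So
   Lambda has the same relations as any realization [lam] of [p] and, spanning
   as well, is D-J equivalent to it. *)

Section LinearAlgebra.
Variable R : comUnitRingType.

Definition no_zero_divisors : Prop := forall a b : R, a * b = 0 -> (a == 0) || (b == 0).

Definition spans (V : finType) (N : nat) (X : V -> 'cV[R]_N) : Prop :=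
  forall x : 'cV[R]_N, exists c : V -> R, x = \sum_u c u *: X u.

Lemma col_matrixP (m n : nat) (A B : 'M[R]_(m, n)) :
  (forall j, col j A = col j B) -> A = B.
Proof. by move=> eAB; apply/matrixP => i j; have /colP/(_ i) := eAB j; rewrite !mxE. Qed.

Lemma surjective_mx_rinv (m n : nat) (A : 'M[R]_(m, n)) :
  (forall y : 'cV_m, exists x, A *m x = y) -> exists C : 'M_(n, m), A *m C = 1%:M.
Proof.
move=> surjA; have [C AC] := fin_all_exists (fun j : 'I_m => surjA (delta_mx j 0)).
exists (\sum_j C j *m (delta_mx 0 j : 'rV_m)).
rewrite mulmx_sumr mx1_sum_delta; apply: eq_bigr => j _.
by rewrite mulmxA AC mul_delta_mx.
Qed.

(* [B = (B C) A] and [A = (A D) B] for right inverses [C] of [A] and [D] of [B]. *)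
Lemma same_kernel_unitmx (m n : nat) (A B : 'M[R]_(m, n)) :
  (exists C : 'M_(n, m), A *m C = 1%:M) -> (exists D, B *m D = 1%:M) ->
  (forall x : 'cV_n, A *m x = 0 <-> B *m x = 0) ->
  exists2 g, g \in unitmx & B = g *m A.
Proof.
move=> [C AC] [D BD] kerAB.
have factor (A' B' : 'M[R]_(m, n)) (C' : 'M_(n, m)) : A' *m C' = 1%:M ->
    (forall x : 'cV_n, A' *m x = 0 -> B' *m x = 0) -> B' = B' *m C' *m A'.
  move=> AC' ker; apply: col_matrixP => j; apply/eqP; rewrite eq_sym -subr_eq0 !colE.
  rewrite -!mulmxA -mulmxBr; apply/eqP/ker.
  by rewrite mulmxBr !mulmxA AC' mul1mx subrr.
have eB := factor A B C AC (fun x => proj1 (kerAB x)).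
have eA := factor B A D BD (fun x => proj2 (kerAB x)).
have /mulmx1_unit[_ gU] : A *m D *m (B *m C) = 1%:M.
  by rewrite mulmxA -eA AC.
by exists (B *m C).
Qed.

Definition fam_mx (V : finType) (N : nat) (X : V -> 'cV[R]_N) : 'M[R]_(N, #|V|) :=
  \matrix_(i, j) X (enum_val j) i 0.

Lemma fam_mx_col (V : finType) (N : nat) (X : V -> 'cV[R]_N) u :
  fam_mx X *m delta_mx (enum_rank u) 0 = X u.
Proof. by rewrite -colE; apply/colP => i; rewrite !mxE enum_rankK. Qed.

Lemma fam_mx_mul (V : finType) (N : nat) (X : V -> 'cV[R]_N) (x : 'cV_#|V|) :
  fam_mx X *m x = \sum_u x (enum_rank u) 0 *: X u.
Proof.
rewrite {1}(matrix_sum_delta x) mulmx_sumr (reindex enum_rank); last first.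
  by apply: onW_bij; apply: enum_rank_bij.
by apply: eq_bigr => u _; rewrite big_ord1 -scalemxAr fam_mx_col.
Qed.

Lemma DJ_equiv_of_relations (V : finType) (N : nat) (X Y : V -> 'cV[R]_N) :
  spans X -> spans Y ->
  (forall c : V -> R, \sum_u c u *: X u = 0 <-> \sum_u c u *: Y u = 0) ->
  DJ_equiv X Y.
Proof.
move=> spX spY relXY.
have surj (Z : V -> 'cV[R]_N) : spans Z -> forall y : 'cV_N, exists x, fam_mx Z *m x = y.
  move=> spZ y; have [c ->] := spZ y; exists (\col_j c (enum_val j)).
  by rewrite fam_mx_mul; apply: eq_bigr => u _; rewrite mxE enum_rankK.
have ker (x : 'cV_#|V|) : fam_mx X *m x = 0 <-> fam_mx Y *m x = 0.
  by rewrite !fam_mx_mul; apply: relXY.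
have [g gU eg] := same_kernel_unitmx (surjective_mx_rinv (surj X spX))
  (surjective_mx_rinv (surj Y spY)) ker.
by exists g => // u; rewrite -fam_mx_col eg -mulmxA fam_mx_col.
Qed.

Lemma charmap_DJ (V : finType) (L : {set {set V}}) (N : nat) (lam mu : V -> 'cV[R]_N) :
  DJ_equiv lam mu -> charmap L N lam -> charmap L N mu.
Proof.
move=> [g gU emu] chi s sL cs; have [sp ind] := chi s sL cs.
have sum_mu c : \sum_(u in s) c u *: mu u = g *m \sum_(u in s) c u *: lam u.
  by rewrite mulmx_sumr; apply: eq_bigr => u _; rewrite emu scalemxAr.
split=> [x | c rel].
  by have [c ec] := sp (invmx g *m x); exists c; rewrite sum_mu -ec mulKVmx.
by apply: ind; rewrite -(mulKmx gU (\sum_(u in s) _)) -sum_mu rel mulmx0.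
Qed.

Lemma is_proj_DJ (V W : finType) (N N' : nat) (s : {set V}) (lam lam' : V -> 'cV[R]_N)
    (f : W -> V) (mu : W -> 'cV[R]_N') :
  DJ_equiv lam lam' -> is_proj s lam f mu -> is_proj s lam' f mu.
Proof.
move=> [g gU elam'] [P [surjP [kerP emu]]].
have sum_lam' c : \sum_(u in s) c u *: lam' u = g *m \sum_(u in s) c u *: lam u.
  by rewrite mulmx_sumr; apply: eq_bigr => u _; rewrite elam' scalemxAr.
exists (P *m invmx g); split; [|split].
- by move=> y; have [x <-] := surjP y; exists (g *m x); rewrite -mulmxA mulKmx.
- move=> x; rewrite -mulmxA; split=> [/kerP[c ec] | [c ->]].
    by exists c; rewrite sum_lam' -ec mulKVmx.
  by apply/kerP; exists c; rewrite sum_lam' mulKmx.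
- by move=> w; rewrite emu elam' -mulmxA mulKmx.
Qed.

Lemma is_proj_uniq (V W : finType) (N N' : nat) (s : {set V}) (lam : V -> 'cV[R]_N)
    (f : W -> V) (mu mu' : W -> 'cV[R]_N') :
  is_proj s lam f mu -> is_proj s lam f mu' -> DJ_equiv mu mu'.
Proof.
move=> [P [surjP [kerP emu]]] [P' [surjP' [kerP' emu']]].
have [g gU eP'] := same_kernel_unitmx (surjective_mx_rinv surjP)
  (surjective_mx_rinv surjP') (fun x => iff_trans (kerP x) (iff_sym (kerP' x))).
by exists g => // w; rewrite emu emu' eP' mulmxA.
Qed.

Lemma span_mem (V : finType) (N : nat) (lam : V -> 'cV[R]_N) (s : {set V}) u : u \in s ->
  exists c : V -> R, lam u = \sum_(v in s) c v *: lam v.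
Proof.
move=> us; exists (fun v => (v == u)%:R).
rewrite (bigD1 u) //= eqxx scale1r big1 ?addr0 // => v /andP[_ /negPf ->].
by rewrite scale0r.
Qed.

Lemma sum_col_mx (W : finType) (n1 n2 : nat) (f : W -> 'cV[R]_n1) (g : W -> 'cV[R]_n2) :
  \sum_w col_mx (f w) (g w) = col_mx (\sum_w f w) (\sum_w g w).
Proof. by elim/big_rec3: _ => [|w A B C _ ->]; rewrite ?col_mx0 ?add_col_mx. Qed.

Lemma basis_spans (V : finType) (N : nat) (lam : V -> 'cV[R]_N) (F : {set V}) :
  is_basis lam F -> spans lam.
Proof.
move=> [sp _] x; have [c ->] := sp x; exists (fun u => if u \in F then c u else 0).
by rewrite big_mkcond; apply: eq_bigr => u _; case: (u \in F); rewrite ?scale0r.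
Qed.

Lemma basis_not_in_span (V : finType) (N : nat) (lam : V -> 'cV[R]_N) (F s : {set V}) v :
  is_basis lam F -> s \subset F -> v \in F -> v \notin s ->
  ~ exists g : V -> R, lam v = \sum_(u in s) g u *: lam u.
Proof.
move=> [_ ind] sF vF vs [g eg].
pose c u := (u == v)%:R - (if u \in s then g u else 0).
suff /(ind c)/(_ v vF)/eqP : \sum_(u in F) c u *: lam u = 0.
  by rewrite /c eqxx (negPf vs) subr0 oner_eq0.
under eq_bigr => u _ do rewrite scalerBl.
rewrite sumrB (bigD1 v) //= eqxx scale1r big1 ?addr0; last first.
  by move=> u /andP[_ /negPf ->]; rewrite scale0r.
suff -> : \sum_(u in F) (if u \in s then g u else 0) *: lam u = lam v by rewrite subrr.
rewrite eg big_mkcond [RHS]big_mkcond; apply: eq_bigr => u _.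
by case: (boolP (u \in s)) => [/(subsetP sF)-> | _]; case: (u \in F); rewrite ?scale0r.
Qed.

Lemma scalemx_eq0_nzd (n : nat) (a : R) (x : 'cV[R]_n) :
  no_zero_divisors -> a *: x = 0 -> x != 0 -> a = 0.
Proof.
move=> no_zd ax0 nx0; case: (eqVneq a 0) => // a0; case/eqP: nx0; apply/colP => i.
have /colP/(_ i) := ax0; rewrite !mxE => /no_zd.
by rewrite (negPf a0) => /eqP.
Qed.

End LinearAlgebra.

Section Fan.
Variables (F : realFieldType) (m n : nat) (w : 'I_m -> 'rV[F]_n).

Definition supported_on (s : {set 'I_m}) (c : 'I_m -> F) : Prop :=
  forall i, i \notin s -> c i = 0.

Definition fan_indep (s : {set 'I_m}) : Prop :=
  forall c, supported_on s c -> \sum_i c i *: w i = 0 -> forall i, c i = 0.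

Lemma fan_coef_uniq s (c c' : 'I_m -> F) : fan_indep s ->
  supported_on s c -> supported_on s c' -> \sum_i c i *: w i = \sum_i c' i *: w i ->
  forall i, c i = c' i.
Proof.
move=> ind sc sc' ecc' i; apply/eqP; rewrite -subr_eq0; apply/eqP; move: i.
apply: ind => [i ni|]; first by rewrite sc // sc' // subrr.
by under eq_bigr => i _ do rewrite scalerBl; rewrite sumrB ecc' subrr.
Qed.

Definition span_mx (s : {set 'I_m}) : 'M[F]_(#|s|, n) := \matrix_(j < #|s|) w (enum_val j).

Lemma sum_supported s c : supported_on s c ->
  \sum_i c i *: w i = (\row_j c (enum_val j)) *m span_mx s.
Proof.
move=> sc; rewrite mulmx_sum_row (bigID (mem s)) /= [X in _ + X]big1 ?addr0.
  by rewrite big_enum_val; apply: eq_bigr => j _; rewrite rowK mxE.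
by move=> i /sc ->; rewrite scale0r.
Qed.

Lemma row_free_span_mx s : fan_indep s -> row_free (span_mx s).
Proof.
move=> ind; rewrite -kermx_eq0; apply/eqP/row_matrixP => r; rewrite row0.
set u := row r _; pose c i := \sum_(j | enum_val j == i) u 0 j.
have cE j : c (enum_val j) = u 0 j.
  by rewrite /c (big_pred1 j) // => k; rewrite (inj_eq enum_val_inj).
have sc : supported_on s c.
  move=> i ni; rewrite /c big_pred0 // => j; apply/negP => /eqP ej.
  by move: ni; rewrite -ej enum_valP.
have urow : \row_j c (enum_val j) = u by apply/rowP => j; rewrite mxE cE.
have c0 : forall i, c i = 0.
  by apply: (ind _ sc); rewrite (sum_supported sc) urow /u -row_mul mulmx_ker row0.
by apply/rowP => j; rewrite -cE c0 mxE.
Qed.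

Lemma exists_not_in_span (s t : {set 'I_m}) : fan_indep t -> #|t| = n -> (#|s| < n)%N ->
  exists y : 'rV[F]_n, forall c, supported_on s c -> y <> \sum_i c i *: w i.
Proof.
move=> indt ct ltsn; have : ~~ (span_mx t <= span_mx s)%MS.
  apply/negP => /mxrankS; move/eqP: (row_free_span_mx indt) => ->.
  by rewrite ct leqNgt (leq_ltn_trans (rank_leq_row _) ltsn).
case/row_subPn => j nj; exists (row j (span_mx t)) => c sc ey.
by move/negP: nj; apply; rewrite ey (sum_supported sc) submxMl.
Qed.

(* Simplicial cones are closed: the coefficients of [x0 + l y] are affine in
   [l], so those of [x0] are limits of nonnegative numbers. *)
Lemma cone_of_ray_limit t (x0 y : 'rV[F]_n) : fan_indep t ->
  (forall dl, 0 < dl -> exists l, [/\ 0 < l, l < dl & cone w t (x0 + l *: y)]) ->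
  cone w t x0.
Proof.
move=> ind near.
have [l1 [l1_gt0 _ [c1 [_ [sc1 e1]]]]] := near 1 ltr01.
have [l2 [l2_gt0 l21 [c2 [_ [sc2 e2]]]]] := near l1 l1_gt0.
have l12 : l1 - l2 != 0 by rewrite subr_eq0 gt_eqF.
pose dd i := (l1 - l2)^-1 * (c1 i - c2 i).
pose c0 i := c2 i - l2 * dd i.
have sdd : supported_on t dd by move=> i ni; rewrite /dd sc1 // sc2 // subrr mulr0.
have sc0 : supported_on t c0 by move=> i ni; rewrite /c0 sdd // sc2 // mulr0 subrr.
have ey : y = \sum_i dd i *: w i.
  have e12 : (l1 - l2) *: y = \sum_i (c1 i - c2 i) *: w i.
    under eq_bigr => i _ do rewrite scalerBl.
    by rewrite sumrB -e1 -e2 scalerBl opprD addrACA subrr add0r.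
  under eq_bigr => i _ do rewrite -scalerA.
  by rewrite -scaler_sumr -e12 scalerA mulVf // scale1r.
have ex0 : x0 = \sum_i c0 i *: w i.
  under eq_bigr => i _ do rewrite scalerBl -scalerA.
  by rewrite sumrB -scaler_sumr -ey -e2 addrK.
exists c0; split=> // i; rewrite leNgt; apply/negP => c0i_lt0.
have dd1_gt0 : 0 < `|dd i| + 1 by rewrite ltr_wpDl.
have [|l [l_gt0 ldl [c [c_ge0 [sc e]]]]] := near (- c0 i / (`|dd i| + 1)).
  by rewrite divr_gt0 // oppr_gt0.
have ec : c i = c0 i + l * dd i.
  apply: (fan_coef_uniq (c' := fun j => c0 j + l * dd j) ind sc) => [j nj|].
    by rewrite sc0 // sdd // mulr0 addr0.
  under [RHS]eq_bigr => j _ do rewrite scalerDl -scalerA.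
  by rewrite big_split /= -scaler_sumr -ey -ex0 -e.
have := c_ge0 i; rewrite ec; rewrite ltr_pdivlMr // in ldl.
have : l * dd i <= l * `|dd i| by apply: ler_wpM2l; [exact: ltW | exact: ler_norm].
lra.
Qed.

Lemma ray_eventually_in_cones (K : {set {set 'I_m}}) (x0 y : 'rV[F]_n) :
  (forall t, t \in K -> fan_indep t) ->
  exists2 l, 0 < l & forall t, t \in K -> cone w t (x0 + l *: y) -> cone w t x0.
Proof.
move=> indK; have gap t : exists dl, 0 < dl /\ (t \in K ->
    forall l, 0 < l -> l < dl -> cone w t (x0 + l *: y) -> cone w t x0).
  case: (classic (t \in K -> cone w t x0)) => [x0t | nK].
    by exists 1; split=> // tK l _ _ _; apply: x0t.
  have [tK nx0] := imply_to_and _ _ nK.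
  apply: NNPP => nogap; apply/nx0/(cone_of_ray_limit (y := y) (indK t tK)) => dl dl0.
  apply: NNPP => far; apply: nogap; exists dl; split=> // _ l l0 ldl xl.
  by case: far; exists l.
have [dl gapdl] := fin_all_exists gap.
have min_gt0 : 0 < \big[Num.min/1]_t dl t.
  by apply: lt_bigmin => // t _; case: (gapdl t).
have half_gt0 : 0 < (\big[Num.min/1]_t dl t) / 2 by rewrite divr_gt0.
exists ((\big[Num.min/1]_t dl t) / 2) => // t tK; apply: (proj2 (gapdl t) tK) => //.
by apply: (lt_le_trans _ (bigmin_le _ t _)); lra.
Qed.

Lemma fan_face_extends (K : {set {set 'I_m}}) s : complete_fan K w ->
  (exists2 t, t \in K & #|t| = n) -> s \in K -> (#|s| < n)%N ->
  exists2 t, t \in K & s \proper t.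
Proof.
move=> [ind [inter cover]] [t0 t0K ct0] sK ltsn.
have [y y_out] := exists_not_in_span (ind t0 t0K) ct0 ltsn.
pose x0 := \sum_i (i \in s)%:R *: w i.
have s1 : supported_on s (fun i => (i \in s)%:R) by move=> i /negPf ->.
have x0s : cone w s x0 by exists (fun i => (i \in s)%:R); split=> // i; apply: ler0n.
have [l l_gt0 enter] := ray_eventually_in_cones x0 y ind.
have [t tK xt] := cover (x0 + l *: y).
have x0t := enter t tK xt.
exists t => //.
have st : s \subset t.
  have [c [_ [sc ec]]] := inter s t sK tK x0 x0s x0t.
  have sc' : supported_on s c by move=> i ni; rewrite sc // inE (negPf ni).
  apply/subsetP => i si; case: (boolP (i \in t)) => // nt.
  have := fan_coef_uniq (ind s sK) s1 sc' ec i.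
  by rewrite si sc ?inE ?(negPf nt) ?andbF // => /eqP; rewrite oner_eq0.
rewrite properEneq st andbT; apply/eqP => est; subst t.
case: xt => c [_ [sc e]].
apply: (y_out (fun i => l^-1 * (c i - (i \in s)%:R))).
  by move=> i ni; rewrite sc // s1 // subrr mulr0.
under eq_bigr => i _ do rewrite -scalerA scalerBl.
by rewrite -scaler_sumr sumrB -e addrAC subrr add0r scalerA mulVf ?scale1r // gt_eqF.
Qed.

End Fan.

Lemma star_shaped_sphere_pure (m n : nat) (K : {set {set 'I_m}}) :
  star_shaped_sphere n K -> forall k : 'I_m, exists tau, [/\ tau \in K, k \in tau & #|tau| = n].
Proof.
move=> [[_ [_ K1]] [t0 [le [F [w fan]]]]] k.
have k0 : ([set k] \in K) && (k \in [set k]) by rewrite K1 set11.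
case: (@arg_maxnP _ [set k] (fun s => (s \in K) && (k \in s)) (fun s => #|s|) k0).
move=> s /andP[sK ks] smax.
exists s; split=> //; apply/eqP; rewrite eqn_leq le //= leqNgt; apply/negP => lt.
have [t tK st] := fan_face_extends fan t0 sK lt.
have := smax t; rewrite tK (subsetP (proper_sub st)) // => /(_ isT).
by move=> /(leq_trans (proper_card st)); rewrite ltnn.
Qed.

Section KJFaces.
Variables (m : nat) (d : 'I_m -> nat).
Local Notation Tg := (Tagged (fun i : 'I_m => 'I_(d i).+1)).

Lemma sum_KJV (V : nmodType) (F : KJV d -> V) :
  \sum_u F u = \sum_i \sum_(j : 'I_(d i).+1) F (Tg j).
Proof.
rewrite [RHS](sig_big_dep (fun _ => true) (fun _ _ => true) (fun i j => F (Tg j))) /=.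
by apply: eq_bigr => -[i j].
Qed.

Lemma idJ_inj (al : IJ d) : injective (idJ al).
Proof. by move=> i j /(congr1 tag). Qed.

Lemma idJ_notin_sigmaJ (al : IJ d) k : idJ al k \notin sigmaJ al.
Proof. by rewrite inE /= eqxx. Qed.

Definition lift_face (al : IJ d) (tau : {set 'I_m}) : {set KJV d} :=
  [set u | (u \in sigmaJ al) || (tag u \in tau)].

Lemma sigmaJ_sub_lift_face al tau : sigmaJ al \subset lift_face al tau.
Proof. by apply/subsetP => u us; rewrite inE us. Qed.

Lemma idJ_lift_face al tau k : (idJ al k \in lift_face al tau) = (k \in tau).
Proof. by rewrite !inE /= eqxx. Qed.

Lemma lift_face_KJ (K : {set {set 'I_m}}) al tau :
  simplicial_complex K -> tau \in K -> lift_face al tau \in KJ K d.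
Proof.
move=> [_ [closedK _]] tauK; rewrite inE; apply/forallP => t; apply/implyP.
case/andP => tK _; apply: contra tK => /subsetP sub; apply: (closedK tau) => //.
by apply/subsetP => i it; rewrite -(idJ_lift_face al) sub // inE.
Qed.

Lemma card_KJV : #|KJV d| = (\sum_(i < m) d i + m)%N.
Proof.
rewrite card_tagged sumnE big_map big_enum /=.
transitivity (\sum_(i < m) (d i + 1))%N; first by apply: eq_bigr => i _; rewrite card_ord addn1.
by rewrite big_split /= sum1_card card_ord.
Qed.

Lemma card_lift_face al (tau : {set 'I_m}) n : #|tau| = n -> #|lift_face al tau| = NJ n d.
Proof.
move=> ctau; have compl : ~: lift_face al tau = idJ al @: ~: tau.
  apply/setP => u; rewrite !inE negb_or negbK.
  apply/andP/imsetP => [[/eqP eu ntau] | [i ni ->]].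
    by exists (tag u); rewrite ?inE // -eu.
  by rewrite inE in ni.
have h1 : (#|lift_face al tau| + #|~: tau|)%N = #|KJV d|.
  by rewrite -(cardsC (lift_face al tau)) compl card_imset //; apply: idJ_inj.
have h2 : (#|tau| + #|~: tau|)%N = m by rewrite cardsC card_ord.
rewrite card_KJV in h1; rewrite /NJ -ctau; lia.
Qed.

Lemma idJ_hJ k (j : 'I_(d k).+1) : idJ (hJ d k j) k = Tg j.
Proof. by rewrite /idJ /hJ eqxx inord_val. Qed.

Lemma sigmaJ_oneJ_hJ k (j : 'I_(d k).+1) u :
  u \in sigmaJ (oneJ d) -> u != Tg j -> u \in sigmaJ (hJ d k j).
Proof.
case: u => i j'; rewrite !inE /= /hJ; case: (eqVneq i k) => [eik | //]; subst i.
by rewrite !eq_Tagged /= inord_val.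
Qed.

Lemma sigmaJ_oneJ k (j : 'I_(d k).+1) : (Tg j \in sigmaJ (oneJ d)) = (0 < j)%N.
Proof. by rewrite inE eq_Tagged -(inj_eq val_inj) lt0n. Qed.

End KJFaces.

Section Realization.
Variables (R : comUnitRingType) (m n : nat) (K : {set {set 'I_m}}) (d : 'I_m -> nat).
Hypothesis scK : simplicial_complex K.
Hypothesis facetK : exists2 t, t \in K & #|t| = n.
Hypothesis pureK : forall k, exists tau, [/\ tau \in K, k \in tau & #|tau| = n].
Hypothesis nzdR : no_zero_divisors R.

Local Notation V := (KJV d).
Local Notation N := (NJ n d).
Local Notation Tg := (Tagged (fun i : 'I_m => 'I_(d i).+1)).

Definition relation_at (al : IJ d) (p : IJ d -> 'I_m -> 'cV[R]_n) (c : V -> R) : Prop :=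
  \sum_w c (idJ al w) *: p al w = 0.

Definition star_relation (p : IJ d -> 'I_m -> 'cV[R]_n) (c : V -> R) : Prop :=
  relation_at (oneJ d) p c /\ forall k b, (0 < b <= d k)%N -> relation_at (hJ d k b) p c.

Lemma proj_sum (al : IJ d) (N' : nat) (lam : V -> 'cV[R]_N') (P : 'M[R]_(n, N'))
    (mu : 'I_m -> 'cV[R]_n) :
  (forall x, P *m x = 0 <-> exists c : V -> R, x = \sum_(u in sigmaJ al) c u *: lam u) ->
  (forall w, mu w = P *m lam (idJ al w)) ->
  forall c : V -> R, P *m (\sum_u c u *: lam u) = \sum_w c (idJ al w) *: mu w.
Proof.
move=> kerP emu c; rewrite mulmx_sumr sum_KJV; apply: eq_bigr => i _.
rewrite (bigD1 (al i)) //= big1 ?addr0 -?scalemxAr ?emu // => j nj.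
rewrite -scalemxAr (_ : P *m lam (Tg j) = 0) ?scaler0 //.
by apply/kerP/span_mem; rewrite inE eq_Tagged.
Qed.

Lemma realized_relation (p : IJ d -> 'I_m -> 'cV[R]_n) (lam : V -> 'cV[R]_N) al c :
  realized_by p lam -> \sum_u c u *: lam u = 0 -> relation_at al p c.
Proof.
move=> rb lam0; have [P [_ [kerP emu]]] := rb al.
by rewrite /relation_at -(proj_sum kerP emu) lam0 mulmx0.
Qed.

Lemma charmap_spans (lam : V -> 'cV[R]_N) : charmap (KJ K d) N lam -> spans lam.
Proof.
move=> chi; have [t tK ct] := facetK.
exact: basis_spans (chi _ (lift_face_KJ (oneJ d) scK tK) (card_lift_face _ ct)).
Qed.

Lemma realized_nonzero (p : IJ d -> 'I_m -> 'cV[R]_n) (lam : V -> 'cV[R]_N) :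
  charmap (KJ K d) N lam -> realized_by p lam -> forall al k, p al k != 0.
Proof.
move=> chi rb al k; apply/eqP => pk0.
have [tau [tauK ktau ctau]] := pureK k; have [P [_ [kerP emu]]] := rb al.
apply: (basis_not_in_span (chi _ (lift_face_KJ al scK tauK) (card_lift_face _ ctau))
  (sigmaJ_sub_lift_face al tau) _ (idJ_notin_sigmaJ al k)).
  by rewrite idJ_lift_face.
by apply/kerP; rewrite -emu.
Qed.

Lemma realized_spans (p : IJ d -> 'I_m -> 'cV[R]_n) (lam : V -> 'cV[R]_N) al :
  charmap (KJ K d) N lam -> realized_by p lam -> spans (p al).
Proof.
move=> chi rb y; have [P [surjP [kerP emu]]] := rb al.
have [x <-] := surjP y; have [c ->] := charmap_spans chi x.
by exists (fun w => c (idJ al w)); rewrite (proj_sum kerP emu).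
Qed.

(* [k_j] is the only vertex of sigma(1) outside sigma(hJ k j). *)
Lemma charmap_relationP (p : IJ d -> 'I_m -> 'cV[R]_n) (lam : V -> 'cV[R]_N) :
  charmap (KJ K d) N lam -> realized_by p lam ->
  forall c : V -> R, \sum_u c u *: lam u = 0 <-> star_relation p c.
Proof.
move=> chi rb c; split=> [lam0 | [rel1 relh]].
  by split=> [|k b _]; apply: realized_relation rb lam0.
have [P [_ [kerP emu]]] := rb (oneJ d).
have /kerP[b eb] : P *m (\sum_u c u *: lam u) = 0 by rewrite (proj_sum kerP emu).
rewrite eb; apply: big1 => -[k j] us; suff -> : b (Tg j) = 0 by rewrite scale0r.
have jb : (0 < j <= d k)%N by rewrite -sigmaJ_oneJ us -ltnS ltn_ord.
have [Ph [_ [kerPh emuh]]] := rb (hJ d k j).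
have := proj_sum kerPh emuh c; rewrite [RHS]relh // eb mulmx_sumr (bigD1 (Tg j) us) /=.
rewrite big1 ?addr0 => [|u /andP[u1 uj]]; last first.
  rewrite -scalemxAr (_ : Ph *m lam u = 0) ?scaler0 //.
  by apply/kerPh/span_mem; apply: sigmaJ_oneJ_hJ.
rewrite -scalemxAr -idJ_hJ -emuh => bp0.
exact: scalemx_eq0_nzd nzdR bp0 (realized_nonzero chi rb _ _).
Qed.

Lemma relation_at_DJ al (p q : IJ d -> 'I_m -> 'cV[R]_n) c :
  DJ_equiv (p al) (q al) -> relation_at al p c <-> relation_at al q c.
Proof.
move=> [g gU eq]; rewrite /relation_at.
have -> : \sum_w c (idJ al w) *: q al w = g *m \sum_w c (idJ al w) *: p al w.
  by rewrite mulmx_sumr; apply: eq_bigr => w _; rewrite eq scalemxAr.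
split=> [-> | gp0]; first by rewrite mulmx0.
by rewrite -(mulKmx gU (\sum_w _)) gp0 mulmx0.
Qed.

Lemma star_relation_DJ (p q : IJ d -> 'I_m -> 'cV[R]_n) :
  DJ_equiv (p (oneJ d)) (q (oneJ d)) ->
  (forall k b, (0 < b <= d k)%N -> DJ_equiv (p (hJ d k b)) (q (hJ d k b))) ->
  forall c, star_relation p c <-> star_relation q c.
Proof.
move=> eq1 eqh c; have rel_1 := @relation_at_DJ (oneJ d) p q c eq1.
have rel_h k b kb := @relation_at_DJ (hJ d k b) p q c (eqh k b kb).
split=> -[r1 rh]; split=> [|k b kb].
- exact/rel_1.
- exact/(rel_h k b kb)/rh.
- exact/rel_1.
- exact/(rel_h k b kb)/rh.
Qed.

Lemma realizable_uniq (p q : IJ d -> 'I_m -> 'cV[R]_n) :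
  realizable K p -> realizable K q ->
  DJ_equiv (p (oneJ d)) (q (oneJ d)) ->
  (forall k b, (0 < b <= d k)%N -> DJ_equiv (p (hJ d k b)) (q (hJ d k b))) ->
  forall al, DJ_equiv (p al) (q al).
Proof.
move=> [lp [chip rp]] [lq [chiq rq]] eq1 eqh al.
have lpq : DJ_equiv lp lq.
  apply: DJ_equiv_of_relations (charmap_spans chip) (charmap_spans chiq) _ => c.
  by rewrite (charmap_relationP chip rp) (star_relation_DJ eq1 eqh) (charmap_relationP chiq rq).
exact: is_proj_uniq (is_proj_DJ lpq (rp al)) (rq al).
Qed.

End Realization.

Section LambdaMatrix.
Variables (R : comUnitRingType) (m n : nat) (d : 'I_m -> nat).
Variables (a : 'I_m -> 'cV[R]_n) (e : 'I_m -> nat -> 'I_m -> R).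
Local Notation V := (KJV d).
Local Notation Tg := (Tagged (fun i : 'I_m => 'I_(d i).+1)).
Local Notation Lam := (@Lambda R m n d a e).

Definition low_index (r : lowrow d) : 'I_(\sum_(i < m) d i) :=
  cast_ord (card_lowrow d) (enum_rank r).

Definition low_of_index (k : 'I_(\sum_(i < m) d i)) : lowrow d :=
  enum_val (cast_ord (esym (card_lowrow d)) k).

Lemma low_indexK : cancel low_index low_of_index.
Proof. by move=> r; rewrite /low_index /low_of_index cast_ordK enum_rankK. Qed.

Lemma low_of_indexK : cancel low_of_index low_index.
Proof. by move=> k; rewrite /low_index /low_of_index enum_valK cast_ordKV. Qed.

Lemma sum_low_index (W : nmodType) (F : 'I_(\sum_(i < m) d i) -> W) :
  \sum_k F k = \sum_r F (low_index r).
Proof. by apply: reindex; exists low_of_index => ? _; rewrite ?low_indexK ?low_of_indexK. Qed.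

(* The vertex [i_(t+2)] of K(J) whose column in Lambda is the unit vector of the row (i, t). *)
Definition lift_vertex (r : lowrow d) : V := Tg (lift ord0 (tagged r)).

Lemma sum_KJV_lift (W : nmodType) (F : V -> W) :
  \sum_u F u = \sum_i F (Tg (ord0 : 'I_(d i).+1)) + \sum_r F (lift_vertex r).
Proof.
rewrite sum_KJV; under eq_bigr => i _ do rewrite big_ord_recl.
rewrite big_split /=; congr (_ + _).
rewrite (sig_big_dep (fun _ => true) (fun _ _ => true)
  (fun i (j : 'I_(d i)) => F (Tg (lift ord0 j)))) /=.
by apply: eq_bigr => -[].
Qed.

Lemma usubmx_Lambda x : usubmx (Lam x) = if val (tagged x) == 0%N then a (tag x) else 0.
Proof. by rewrite col_mxKu. Qed.

Lemma dsubmx_Lambda x r : dsubmx (Lam x) (low_index r) 0 = Lambda_entry e x r.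
Proof. by rewrite col_mxKd castmxE /= mxE /low_index cast_ordK enum_rankK. Qed.

Lemma Lambda_lift_vertex r : Lam (lift_vertex r) = col_mx 0 (delta_mx (low_index r) 0).
Proof.
rewrite -[LHS]vsubmxK usubmx_Lambda /=; congr col_mx.
apply/colP => k; rewrite -(low_of_indexK k) dsubmx_Lambda mxE eqxx andbT.
rewrite (inj_eq (can_inj low_indexK)) /Lambda_entry /=.
case: r (low_of_index k) => i t [k' t'] /=; case: (eqVneq k' i) => [eki | nki].
  by subst k'; rewrite eq_Tagged /bump /= add1n eqSS -(inj_eq val_inj) eq_sym; case: eqP.
suff /negPf -> : Tagged (fun i => 'I_(d i)) t' != Tagged (fun i => 'I_(d i)) t by [].
by apply: contra nki => /eqP/(congr1 tag) /= ->.
Qed.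

Lemma Lambda_relationP (c : V -> R) :
  \sum_x c x *: Lam x = 0 <->
  \sum_i c (Tg (ord0 : 'I_(d i).+1)) *: a i = 0 /\
  forall r, \sum_x c x * Lambda_entry e x r = 0.
Proof.
set S := \sum_x _; have eu : usubmx S = \sum_i c (Tg (ord0 : 'I_(d i).+1)) *: a i.
  rewrite linear_sum sum_KJV_lift /= [X in _ + X]big1 => [|r _]; last first.
    by rewrite linearZ /= usubmx_Lambda /= scaler0.
  by rewrite addr0; apply: eq_bigr => i _; rewrite linearZ /= usubmx_Lambda.
have ed r : dsubmx S (low_index r) 0 = \sum_x c x * Lambda_entry e x r.
  by rewrite linear_sum summxE; apply: eq_bigr => x _; rewrite linearZ mxE dsubmx_Lambda.
split=> [S0 | [top0 low0]].
  by split=> [|r]; [rewrite -eu S0 linear0 | rewrite -ed S0 linear0 mxE].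
rewrite -(vsubmxK S) eu top0 (_ : dsubmx S = 0) ?col_mx0 //.
by apply/colP => k; rewrite -(low_of_indexK k) ed low0 mxE.
Qed.

Lemma Lambda_entry_sum (c : V -> R) k (t : 'I_(d k)) :
  \sum_x c x * Lambda_entry e x (Tagged (fun k => 'I_(d k)) t) =
  c (Tg (lift ord0 t)) - c (Tg (ord0 : 'I_(d k).+1))
  + \sum_(i | i != k) c (Tg (ord0 : 'I_(d i).+1)) * e k t.+1 i.
Proof.
rewrite sum_KJV (bigD1 k) //=; congr (_ + _).
  rewrite big_ord_recl /Lambda_entry /= eqxx /= mulrN1 addrC; congr (_ - _).
  rewrite (bigD1 t) //= eqxx mulr1 big1 ?addr0 // => j jt.
  by rewrite /bump /= add1n eqSS -(inj_eq val_inj) /= in jt *; rewrite (negPf jt) mulr0.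
apply: eq_bigr => i ik; rewrite big_ord_recl /Lambda_entry /= eq_sym (negPf ik) /=.
by rewrite big1 ?addr0 // => j _; rewrite mulr0.
Qed.

Lemma Lambda_spans : spans a -> spans Lam.
Proof.
move=> span_a x; have [c ec] := span_a (usubmx x).
pose y := dsubmx x - \sum_i c i *: dsubmx (Lam (Tg (ord0 : 'I_(d i).+1))).
exists (fun u => if unlift ord0 (tagged u) is Some j
                 then y (low_index (Tagged (fun k => 'I_(d k)) j)) 0 else c (tag u)).
rewrite sum_KJV_lift /=.
under eq_bigr => i _ do rewrite unlift_none -[Lam _]vsubmxK usubmx_Lambda /= scale_col_mx.
under [X in _ + X]eq_bigr => r _ do rewrite liftK Lambda_lift_vertex scale_col_mx scaler0.
rewrite !sum_col_mx add_col_mx big1_eq addr0 -ec.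
have -> : \sum_(r : lowrow d) y (low_index (Tagged (fun k => 'I_(d k)) (tagged r))) 0 *:
    delta_mx (low_index r) 0 = y.
  rewrite (eq_bigr (fun r => y (low_index r) 0 *: delta_mx (low_index r) 0)) => [|[] //].
  rewrite -(sum_low_index (fun k => y k 0 *: delta_mx k 0)) [RHS]matrix_sum_delta.
  by apply: eq_bigr => k _; rewrite big_ord1.
by rewrite /y addrC subrK vsubmxK.
Qed.

End LambdaMatrix.

Section StandardForm.
Variables (R : comUnitRingType) (m n : nat) (d : 'I_m -> nat) (a : 'I_m -> 'cV[R]_n).
Local Notation Tg := (Tagged (fun i : 'I_m => 'I_(d i).+1)).

Lemma std_form_v2 k (ev : 'I_m -> R) w :
  std_form a ev (idJ (hJ (dwed k) k 1) w) =
  col_mx (if w == k then 0 else a w) (if w == k then 1 else ev w)%:M.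
Proof.
rewrite /std_form /idJ /hJ /=; case: (eqVneq w k) => [-> | //] /=.
by rewrite inordK // /dwed eqxx.
Qed.

(* Relative to the face {v_1} of wed_k K, the column (a_k; -1) at v_1 dies, so a
   relation among [a] with coefficients [c] at the copies [i_1] lifts to
   [l *: (0; 1) - c_(k_1) *: (a_k; -1)] with [l] the (k, t) row of Lambda. *)
Lemma std_form_relation k (t : 'I_(d k)) (ev : 'I_m -> R) (mu : 'I_m -> 'cV[R]_n)
    (c : KJV d -> R) :
  no_zero_divisors R ->
  is_proj (sigmaJ (hJ (dwed k) k 1)) (std_form a ev) (idJ (hJ (dwed k) k 1)) mu ->
  mu k != 0 -> \sum_i c (Tg (ord0 : 'I_(d i).+1)) *: a i = 0 ->
  \sum_w c (idJ (hJ d k t.+1) w) *: mu w = 0 <->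
  c (Tg (lift ord0 t)) - c (Tg (ord0 : 'I_(d k).+1))
    + \sum_(i | i != k) c (Tg (ord0 : 'I_(d i).+1)) * ev i = 0.
Proof.
move=> nzdR [Q [_ [kerQ emu]]] muk0 top0; set l := (X in _ <-> X = 0).
pose v1 := Tagged (fun i => 'I_(dwed k i).+1) (ord0 : 'I_(dwed k k).+1).
have Qv1 : Q *m std_form a ev v1 = 0.
  apply/kerQ/span_mem; rewrite inE eq_Tagged /= /hJ eqxx -(inj_eq val_inj) /= inordK //.
  by rewrite /dwed eqxx.
have v1E : std_form a ev v1 = col_mx (a k) (-1)%:M by rewrite /std_form /= eqxx.
have mukE : mu k = Q *m col_mx 0 1%:M by rewrite emu std_form_v2 eqxx.
have idJ_h w : w != k -> idJ (hJ d k t.+1) w = Tg (ord0 : 'I_(d w).+1).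
  by move=> wk; rewrite /idJ /hJ (negPf wk).
have -> : \sum_w c (idJ (hJ d k t.+1) w) *: mu w =
    Q *m (l *: col_mx 0 1%:M - c (Tg (ord0 : 'I_(d k).+1)) *: col_mx (a k) (-1)%:M).
  under eq_bigr => w _ do rewrite emu scalemxAr.
  rewrite -mulmx_sumr; congr (_ *m _).
  under eq_bigr => w _ do rewrite std_form_v2 scale_col_mx.
  rewrite sum_col_mx !scale_col_mx opp_col_mx add_col_mx; congr col_mx.
    rewrite (bigD1 k) //= eqxx !scaler0 !add0r.
    move: top0; rewrite (bigD1 k) //= => /eqP; rewrite addrC addr_eq0 => /eqP <-.
    by apply: eq_bigr => w wk; rewrite (negPf wk) idJ_h.
  rewrite (bigD1 k) //= eqxx !scale_scalar_mx.
  under eq_bigr => w wk do rewrite (negPf wk) (idJ_h w wk) scale_scalar_mx.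
  rewrite -raddf_sum -raddfD -raddfB /=; congr (_%:M).
  have lt : lift ord0 t = inord t.+1 by apply/val_inj; rewrite /= inordK // ltnS.
  by rewrite /idJ /hJ eqxx -lt /l !mulr1 mulrN1 opprK addrAC subrK.
rewrite mulmxBr -!scalemxAr -v1E Qv1 scaler0 subr0 -mukE.
by split=> [/(scalemx_eq0_nzd nzdR)/(_ muk0) | ->]; last rewrite scale0r.
Qed.

End StandardForm.

Lemma Lambda_relation_star (R : comUnitRingType) (m n : nat) (d : 'I_m -> nat)
    (p : IJ d -> 'I_m -> 'cV[R]_n) (e : 'I_m -> nat -> 'I_m -> R) :
  no_zero_divisors R ->
  (forall v b, (0 < b <= d v)%N ->
     is_proj (sigmaJ (hJ (dwed v) v 1)) (std_form (p (oneJ d)) (e v b))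
             (idJ (hJ (dwed v) v 1)) (p (hJ d v b))) ->
  (forall k b, p (hJ d k b) k != 0) ->
  forall c, \sum_u c u *: Lambda (p (oneJ d)) e u = 0 <-> star_relation p c.
Proof.
move=> nzdR std nz c; rewrite Lambda_relationP.
have rowE k (t : 'I_(d k)) : relation_at (oneJ d) p c ->
    (\sum_x c x * Lambda_entry e x (Tagged (fun k => 'I_(d k)) t) = 0 <->
     relation_at (hJ d k t.+1) p c).
  move=> top; rewrite Lambda_entry_sum; apply: iff_sym.
  by apply: std_form_relation nzdR (std k t.+1 _) (nz k t.+1) top; rewrite ltn_ord.
split=> -[top rel]; split=> //.
  move=> k [//|b] /andP[_ bd].
  by apply/(rowE k (Ordinal bd) top)/rel.
by move=> [k t]; apply/(rowE k t top)/rel; rewrite ltn_ord.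
Qed.

Lemma coefR_no_zero_divisors (c : coeff) : no_zero_divisors (coefR c).
Proof.
case: c => x y /=; first by move/eqP; rewrite mulf_eq0.
by case: x y => [[|[|//]] ?] [[|[|//]] ?].
Qed.

Unset Implicit Arguments.
Theorem mainTheorem6 (c : coeff) (m n : nat) (K : {set {set 'I_m}})
  (HK : star_shaped_sphere n K) (d : 'I_m -> nat) :
  (* main part: Lambda is an R-characteristic map over K(J) realizing p *)
  (forall (p : IJ d -> 'I_m -> 'cV[coefR c]_n) (e : 'I_m -> nat -> 'I_m -> coefR c),
     realizable K p ->
     (* for each v and 2 <= b+1 <= j_v, the standard form with last row e v b
        is an R-characteristic map over wed_v K realizing the subpuzzle on the
        edge {1, h} (projection at v_2 is p(1), projection at v_1 is p(h)) *)
     (forall (v : 'I_m) (b : nat), (0 < b <= d v)%N ->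
        charmap (KJ K (dwed v)) (n + 1) (std_form (p (oneJ d)) (e v b))
        /\ is_proj (sigmaJ (oneJ (dwed v))) (std_form (p (oneJ d)) (e v b))
                   (idJ (oneJ (dwed v))) (p (oneJ d))
        /\ is_proj (sigmaJ (hJ (dwed v) v 1)) (std_form (p (oneJ d)) (e v b))
                   (idJ (hJ (dwed v) v 1)) (p (hJ d v b))) ->
     charmap (KJ K d) (NJ n d) (Lambda (p (oneJ d)) e)
     /\ realized_by p (Lambda (p (oneJ d)) e))
  /\
  (* in particular: a realizable puzzle is determined by p(1) and the values at
     the vertices adjacent to 1 *)
  (forall p q : IJ d -> 'I_m -> 'cV[coefR c]_n,
     realizable K p -> realizable K q ->
     DJ_equiv (p (oneJ d)) (q (oneJ d)) ->
     (forall (v : 'I_m) (b : nat), (0 < b <= d v)%N ->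
        DJ_equiv (p (hJ d v b)) (q (hJ d v b))) ->
     forall al : IJ d, DJ_equiv (p al) (q al)).
Proof.
have [scK [facetK _]] := HK.
have pureK := star_shaped_sphere_pure HK.
have nzdR := @coefR_no_zero_divisors c.
split; last exact: realizable_uniq scK facetK pureK nzdR.
move=> p e [lam [chi rb]] std.
have lam_Lambda : DJ_equiv lam (Lambda (p (oneJ d)) e).
  apply: DJ_equiv_of_relations (charmap_spans scK facetK chi) _ _.
    exact: Lambda_spans (realized_spans scK facetK (oneJ d) chi rb).
  move=> c'; rewrite (charmap_relationP scK pureK nzdR chi rb).
  apply: iff_sym; apply: Lambda_relation_star nzdR _ _ c' => [v b vb | k b].
    by case: (std v b vb) => _ [].
  exact: (realized_nonzero scK pureK chi rb).
by split; [apply: charmap_DJ lam_Lambda chi | move=> al; apply: is_proj_DJ lam_Lambda (rb al)].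
Qed.
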